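(* Let $q$ be a prime power, $m>3$, and $n=q^m-1$. For an integer design distance $d\ge 2$, the primitive narrow-sense bicyclic hyperbolic code $\mathscr{H}(n\times n,q;d)$ over $\mathbb{F}_q$ contains its Euclidean dual if and only if $d\le\delta$, where $$\delta=\begin{cases}(q^m-1)-2(q^{m/2}-1)=(q^{m/2}-1)^2 & m \text{ even},\\ (q^m-1)-q^{(m-1)/2} & m\text{ odd}.\end{cases}$$
   Context: Bicyclic codes: linear subspaces of $\mathbb{F}_q^{n\times n}$ closed under cyclic shifts of rows and columns, identified with ideals of $\mathbb{F}_q[X,Y]/\langle X^n-1,Y^n-1\rangle$ via $c\mapsto c(X,Y)=\sum c_{i,j}X^iY^j$. Let $\alpha$ be a primitive $n$-th root of unity in $\mathbb{F}_{q^m}$. The $q$-ary cyclotomic coset of $(x,y)$ is $\mathrm{Coset}_{(x,y)}=\{(xq^k\bmod n, yq^k\bmod n):k\ge0\}$. The primitive narrow-sense bicyclic hyperbolic code $\mathscr{H}(n\times n,q;d)$ with design distance $d$ is the set of all $c\in\mathbb{F}_q^{n\times n}$ with $c(\alpha^x,\alpha^y)=0$ for all $(x,y)\in Z=\bigcup_{(x,y)\in Z_{des}}\mathrm{Coset}_{(x,y)}$, where the designed set is $Z_{des}=\{(x\bmod n,\ y\bmod n): 1\le x,y\le n,\ xy<d\}$. The Euclidean dual of $C$ is $C^\perp=\{u\in\mathbb{F}_q^{n\times n}:\sum_{i,j}u_{i,j}v_{i,j}=0\ \forall v\in C\}$. *)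

From HB Require Import structures.
From mathcomp Require Import all_boot all_order all_algebra all_field.
Set Implicit Arguments. Unset Strict Implicit. Unset Printing Implicit Defensive.
Import GRing.Theory.
Local Open Scope ring_scope.

(* (a,b) lies in Z = union of the q-cyclotomic cosets of the designed set
   Z_des = {(x mod n, y mod n) : 1 <= x,y <= n, x*y < d}. *)
Definition in_zero_set (n q d a b : nat) : Prop :=
  exists x y k : nat,
    [/\ (1 <= x <= n)%N, (1 <= y <= n)%N, (x * y < d)%N,
        a = ((x %% n) * q ^ k) %% n & b = ((y %% n) * q ^ k) %% n]%N.

Definition biv_eval (F : fieldType) (L : fieldExtType F) (n : nat)
  (c : 'M[F]_n) (a b : L) : L :=
  \sum_(i < n) \sum_(j < n) (c i j)%:A * a ^+ i * b ^+ j.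

Definition hyp_code (F : fieldType) (L : fieldExtType F) (n q d : nat)
  (alpha : L) (c : 'M[F]_n) : Prop :=
  forall a b : nat, in_zero_set n q d a b ->
    biv_eval c (alpha ^+ a) (alpha ^+ b) = 0.

Definition euclid_dual (F : fieldType) (n : nat) (C : 'M[F]_n -> Prop)
  (u : 'M[F]_n) : Prop :=
  forall v, C v -> \sum_(i < n) \sum_(j < n) u i j * v i j = 0.

Definition dual_containing (F : fieldType) (n : nat) (C : 'M[F]_n -> Prop) : Prop :=
  forall u, euclid_dual C u -> C u.

Definition hyp_delta (q m : nat) : nat :=
  if odd m then (q ^ m - 1 - q ^ ((m - 1) %/ 2))%N
  else ((q ^ (m %/ 2) - 1) ^ 2)%N.

Arguments hyp_code {F L} n q d alpha c.
Arguments dual_containing {F} n C.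
Arguments euclid_dual {F} n C u.

From Stdlib Require Import ZArith Lia.
From HB Require Import structures.
From mathcomp Require Import all_boot all_order all_algebra all_field.
From mathcomp Require Import zify ring.
Import GRing.Theory.

Set Implicit Arguments. Unset Strict Implicit. Unset Printing Implicit Defensive.

(* Let Z be the zero set of the code.  Since Z is a union of q-cyclotomic cosets, the dual
   of the code is contained in the code iff no element of Z is congruent modulo n to -q^k
   times another element of Z: the matrices (Tr (alpha^(t + a i + b j)))_(i,j), with Tr the
   trace of L over F, are codewords of the dual (resp. of the code) whose evaluations
   witness either direction.  This leaves arithmetic modulo n = q^m - 1.  If x y < delta
   and x' = -q^j x, y' = -q^j y modulo n, where exchanging the two pairs allows j <= m/2,
   write n + 1 = A B with A = q^(m-j), B = q^j: the residue of -B x is n - B x when x < A,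
   and elementary inequalities give x' y' >= n - q^(m./2) >= delta.  When d > delta the
   pairs (q^(m/2) - 1, q^(m/2) - 1) for even m, and (1, n - q^(m./2)) and
   (n - q^(m./2 + 1), 1) for odd m, lie in Z and are opposite up to a power of q. *)

Section DeltaInequalities.
Local Open Scope Z_scope.

Lemma key_ineq_odd_aux (N S : Z) : 4 <= S -> 2 * S * S <= N + 1 ->
  (N + 1 - S) * (N - S) + (S - 1) * S * (N - S - 1) * S <= (N + 1 - S) * (S - 1) * N.
Proof.
move=> S4 SN.
have : 0 <= (S - 1) * (N - S - 1) * (N + 1 - 2 * S * S) by apply: Z.mul_nonneg_nonneg; nia.
have : 0 <= (N + 1) * (N + 1 - S) * (S - 3) by apply: Z.mul_nonneg_nonneg; nia.
nia.
Qed.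

(* In the application A = q^(m-j), B = q^j with 2 j <= m, T = q^(m./2) and d = delta. *)
Variables n A B T d : Z.
Hypotheses (AB_eq : A * B = n + 1) (B_gt0 : 1 <= B) (B_le_T : B <= T) (T_ge4 : 4 <= T)
  (B_eq_or_le_T : B = T \/ 2 * B <= T)
  (d_delta : (T * T = n + 1 /\ d = (T - 1) * (T - 1)) \/ (2 * T * T <= n + 1 /\ d = n - T)).

Lemma delta_add_T_le : d + T <= n.
Proof. by case: d_delta => -[]; nia. Qed.

Lemma delta_ge1 : 1 <= d.
Proof. by case: d_delta => -[]; nia. Qed.

Lemma T_sq_le : T * T <= n + 1.
Proof. by case: d_delta => -[]; nia. Qed.

Lemma delta_key_ineq : 2 <= B ->
  (A - 1) * (n - T) + (B - 1) * B * (d - 1) <= (B - 1) * (A - 1) * n.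
Proof.
move=> B_ge2; have dT := delta_add_T_le; have d1 := delta_ge1.
have A1 : 1 <= A by nia.
case: (Z.eq_dec B 2) => [B2 | B_ne2]; first by subst B; clear -dT d1 AB_eq T_ge4; nia.
case: B_eq_or_le_T => [B_eq | B2T]; last first.
  have TT := T_sq_le.
  have A_gt : T + 1 <= A by clear d_delta; nia.
  have : (B - 1) * B * (d - 1) <= (A - 1) * (B - 2) * n.
    apply: (Z.le_trans _ ((A - 1) * (B - 2) * (d - 1))).
      by apply: Z.mul_le_mono_nonneg_r; nia.
    by apply: Z.mul_le_mono_nonneg_l; nia.
  by clear -A1 T_ge4 B_ge2; nia.
subst B; case: d_delta => -[TT ->].
  have A_eq : A = T.
    have : (A - T) * T = 0 by nia.
    by case/Z.mul_eq_0 => ?; lia.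
  by subst A; nia.
have T_gt0 : 0 < T by lia.
apply/(Z.mul_le_mono_pos_l _ _ _ T_gt0).
rewrite Z.mul_add_distr_l.
have -> : T * ((A - 1) * (n - T)) = (n + 1 - T) * (n - T) by nia.
have -> : T * ((T - 1) * (A - 1) * n) = (n + 1 - T) * (T - 1) * n by nia.
by have := key_ineq_odd_aux T_ge4 TT; lia.
Qed.

Lemma opp_prod_ge_B1 x y : B = 1 -> 1 <= x <= n - 1 -> 1 <= y <= n - 1 -> x * y <= d - 1 ->
  n - T <= (n - B * x) * (n - B * y).
Proof.
move=> B1 x_bd y_bd xy_lt; rewrite B1 !Z.mul_1_l; have dT := delta_add_T_le.
have P_ge0 : 0 <= (n - 1 - x) * (n - 1 - y) by apply: Z.mul_nonneg_nonneg; lia.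
have n_gt1 : 0 < n - 1 by lia.
suff : n - 1 < (n - x) * (n - y) by lia.
by apply/(Z.mul_lt_mono_pos_l _ _ _ n_gt1); clear d_delta; nia.
Qed.

Lemma opp_prod_ge_small_small x y : 2 <= B ->
  1 <= x <= A - 1 -> 1 <= y <= A - 1 -> x * y <= d - 1 ->
  n - T <= (n - B * x) * (n - B * y).
Proof.
move=> B_ge2 x_bd y_bd xy_lt; have key := delta_key_ineq B_ge2.
clear d_delta B_eq_or_le_T.
have [s x_eq s_ge1] : exists2 s, x = A - s & 1 <= s by exists (A - x); lia.
have [r y_eq r_ge1] : exists2 r, y = A - r & 1 <= r by exists (A - y); lia.
subst x y.
have -> : n - B * (A - s) = s * B - 1 by lia.
have -> : n - B * (A - r) = r * B - 1 by lia.
have sr_ge0 : 0 <= (s - 1) * (r - 1) by apply: Z.mul_nonneg_nonneg; lia.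
have prod_ge : (B - 1) * (s * r * B - 1) <= (s * B - 1) * (r * B - 1).
  have : 0 <= B * ((s - 1) * (r - 1)) by apply: Z.mul_nonneg_nonneg; lia.
  by lia.
have A_ge2 : 2 <= A by lia.
have sr_ge : A * A - A - d + 1 <= (A - 1) * (s * r).
  have : A * (s + r) <= A * (s * r + 1) by apply: Z.mul_le_mono_nonneg_l; lia.
  by lia.
have bound : (A - 1) * n - B * (d - 1) <= (A - 1) * (s * r * B - 1).
  have : B * (A * A - A - d + 1) <= B * ((A - 1) * (s * r))
    by apply: Z.mul_le_mono_nonneg_l; lia.
  have : A * (A * B) = A * (n + 1) by rewrite AB_eq.
  by lia.
have A1_gt0 : 0 < A - 1 by lia.
apply/(Z.mul_le_mono_pos_l _ _ _ A1_gt0).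
have : (B - 1) * ((A - 1) * n - B * (d - 1)) <= (B - 1) * ((A - 1) * (s * r * B - 1))
  by apply: Z.mul_le_mono_nonneg_l; lia.
have : (A - 1) * ((B - 1) * (s * r * B - 1)) <= (A - 1) * ((s * B - 1) * (r * B - 1))
  by apply: Z.mul_le_mono_nonneg_l; lia.
by lia.
Qed.

Lemma opp_prod_ge_large x : 2 <= B -> 1 <= x -> A * x <= d - 1 -> n - T <= B * (n - B * x).
Proof.
move=> B_ge2 x_ge1 Ax_lt; have dT := delta_add_T_le; have d1 := delta_ge1.
have TT := T_sq_le; have A_gt0 : 0 < A by nia.
have nA : n * (A * B) = n * (n + 1) by rewrite AB_eq.
have lhs_ge : A * (B * (n - B * x)) >= (n + 1) * n - B * B * (d - 1).
  have : B * B * (A * x) <= B * B * (d - 1) by apply: Z.mul_le_mono_nonneg_l; nia.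
  have : (A * B) * n = (n + 1) * n by rewrite AB_eq.
  by lia.
have rhs_le : B * B * (d - 1) <= n * A * (B - 1) + A * T.
  have A2_le : A * 2 <= A * B by apply: Z.mul_le_mono_nonneg_l; lia.
  have nA2 : n * (2 * A) <= n * (n + 1) by apply: Z.mul_le_mono_nonneg_l; lia.
  have dn : (n + 1) * (d - 1) <= (n + 1) * n by apply: Z.mul_le_mono_nonneg_l; lia.
  case: B_eq_or_le_T => [B_eq | B2T]; last first.
    have BB : (2 * B) * (2 * B) <= T * T by apply: Z.mul_le_mono_nonneg; lia.
    have : 4 * (B * B * (d - 1)) <= (n + 1) * (d - 1).
      by rewrite Z.mul_assoc; apply: Z.mul_le_mono_nonneg_r; lia.
    by lia.
  subst B; case: d_delta => -[TT' d_eq]; last first.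
    have : 2 * (T * T * (d - 1)) <= (n + 1) * (d - 1).
      by rewrite Z.mul_assoc; apply: Z.mul_le_mono_nonneg_r; lia.
    by lia.
  have A_eq : A = T.
    have : (A - T) * T = 0 by lia.
    by case/Z.mul_eq_0 => ?; lia.
  have -> : n = T * T - 1 by lia.
  by subst A d; clear -T_ge4; nia.
apply/(Z.mul_le_mono_pos_l _ _ _ A_gt0).
by lia.
Qed.

Lemma opp_prod_ge_small_large x v : 2 <= B -> (A = B \/ 2 * B <= A) ->
  1 <= x <= A - 1 -> 1 <= v <= B - 1 -> x * (n - A * v) <= d - 1 ->
  n - T <= (n - B * x) * v.
Proof.
move=> B_ge2 A_B x_bd v_bd xv_lt.
have dT := delta_add_T_le; have d1 := delta_ge1; have TT := T_sq_le.
have A_ge2 : 2 <= A by lia.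
case: (Z.eq_dec x 1) => [x1 | x_ne1].
  have ? : (n - B) * 1 <= (n - B) * v by apply: Z.mul_le_mono_nonneg_l; lia.
  by subst x; lia.
case: (Z.eq_dec v (B - 1)) => [v_eq | v_ne].
  subst v; have key := delta_key_ineq B_ge2.
  have nAB : n - A * (B - 1) = A - 1 by lia.
  rewrite nAB in xv_lt.
  have ? : B * (x * (A - 1)) <= B * (d - 1) by apply: Z.mul_le_mono_nonneg_l; lia.
  have ? : (B - 1) * ((A - 1) * n - B * (d - 1)) <= (B - 1) * ((A - 1) * n - B * (x * (A - 1)))
    by apply: Z.mul_le_mono_nonneg_l; lia.
  have A1_gt0 : 0 < A - 1 by lia.
  apply/(Z.mul_le_mono_pos_l _ _ _ A1_gt0).
  by lia.
have B_ge3 : 3 <= B by lia.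
case: (Z.eq_dec v 1) => [v1 | v_ne1].
  subst v; exfalso.
  have ? : A * 3 <= A * B by apply: Z.mul_le_mono_nonneg_l; lia.
  have ? : 2 * (n - A * 1) <= x * (n - A * 1) by apply: Z.mul_le_mono_nonneg_r; lia.
  by lia.
have nAv : 2 * A - 1 <= n - A * v.
  have ? : A * v <= A * (B - 2) by apply: Z.mul_le_mono_nonneg_l; lia.
  by lia.
have x_lt : x * (2 * A - 1) <= d - 1.
  have ? : x * (2 * A - 1) <= x * (n - A * v) by apply: Z.mul_le_mono_nonneg_l; lia.
  by lia.
have d_le : 2 * B * (d - 1) <= (n + T) * (2 * A - 1).
  case: A_B => [A_eq | B2A].
    subst A.
    have B_eq : B = T.
      case: (Z.le_gt_cases T B) => [? | T_gt]; first by lia.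
      have ? : (B + 1) * (B + 1) <= T * T by apply: Z.mul_le_mono_nonneg; lia.
      by lia.
    subst B.
    have ? : 2 * T * (d - 1) <= 2 * T * (n - T - 1) by apply: Z.mul_le_mono_nonneg_l; lia.
    by lia.
  have ? : 2 * B * (d - 1) <= 2 * B * n by apply: Z.mul_le_mono_nonneg_l; lia.
  have ? : n * (2 * B) <= n * (2 * A - 1) by apply: Z.mul_le_mono_nonneg_l; lia.
  have ? : n * (2 * A - 1) <= (n + T) * (2 * A - 1) by apply: Z.mul_le_mono_nonneg_r; lia.
  by lia.
have Bx_le : 2 * B * x <= n + T.
  have A1_gt0 : 0 < 2 * A - 1 by lia.
  apply/(Z.mul_le_mono_pos_r _ _ _ A1_gt0).
  have ? : 2 * B * (x * (2 * A - 1)) <= 2 * B * (d - 1) by apply: Z.mul_le_mono_nonneg_l; lia.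
  by lia.
have ? : B * x <= B * (A - 1) by apply: Z.mul_le_mono_nonneg_l; lia.
have ? : 2 * (n - B * x) <= v * (n - B * x) by apply: Z.mul_le_mono_nonneg_r; lia.
by lia.
Qed.

Lemma mul_n_eq s k : 1 <= n -> 0 < s < 2 * n -> s = k * n -> s = n.
Proof.
move=> n_ge1 s_bd s_eq; subst s.
case: (Z.le_gt_cases k 0) => [k_le0 | k_gt0]; first by nia.
case: (Z.le_gt_cases 2 k) => [k_ge2 | k_lt2]; first by nia.
have k1 : k = 1 by lia.
by subst k; lia.
Qed.

Lemma opp_residue_prod_ge_half x y x' y' : (A = B \/ 2 * B <= A) ->
  1 <= x <= A - 1 -> 1 <= y <= n - 1 -> 1 <= x' <= n - 1 -> 1 <= y' <= n - 1 ->
  (exists k, B * x + x' = k * n) -> (exists k, B * y + y' = k * n) -> x * y <= d - 1 ->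
  n - T <= x' * y'.
Proof.
move=> A_B x_bd y_bd x'_bd y'_bd [k1 x_cong] [k2 y_cong] xy_lt.
have dT := delta_add_T_le; have d1 := delta_ge1.
have A_ge_B : B <= A by lia.
have Bx_le : B * x <= B * (A - 1) by apply: Z.mul_le_mono_nonneg_l; lia.
have x'_eq : x' = n - B * x.
  by have := @mul_n_eq (B * x + x') k1; lia.
subst x'.
case: (Z.le_gt_cases y (A - 1)) => [y_le | y_gt].
  have By_le : B * y <= B * (A - 1) by apply: Z.mul_le_mono_nonneg_l; lia.
  have y'_eq : y' = n - B * y.
    by have := @mul_n_eq (B * y + y') k2; lia.
  subst y'; case: (Z.eq_dec B 1) => [B1 | B_ne1].
    by apply: opp_prod_ge_B1; lia.
  by apply: opp_prod_ge_small_small; lia.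
have B_ge2 : 2 <= B by case: (Z.eq_dec B 1) => [B1 | ?]; [subst B; lia | lia].
case: (Z.le_gt_cases y' (B - 1)) => [y'_le | y'_gt].
  (* A B = 1 modulo n, so y = - A y' modulo n. *)
  have y_eq : y = n - A * y'.
    have ? : A * (B * y + y') = A * (k2 * n) by rewrite y_cong.
    have ? : A * B * y = (n + 1) * y by rewrite AB_eq.
    have ? : 0 <= A * y' by apply: Z.mul_nonneg_nonneg; lia.
    have ? : A * y' <= A * (B - 1) by apply: Z.mul_le_mono_nonneg_l; lia.
    have : y + A * y' = n by apply: (@mul_n_eq _ (A * k2 - y)); lia.
    by lia.
  apply: (opp_prod_ge_small_large B_ge2 A_B x_bd); first lia.
  by rewrite -y_eq.
have Ax_le : x * A <= x * y by apply: Z.mul_le_mono_nonneg_l; lia.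
have := @opp_prod_ge_large x B_ge2 ltac:(lia) ltac:(lia).
have : B * (n - B * x) <= y' * (n - B * x) by apply: Z.mul_le_mono_nonneg_r; lia.
by lia.
Qed.

Lemma opp_residue_prod_ge x y x' y' : (A = B \/ 2 * B <= A) ->
  1 <= x <= n - 1 -> 1 <= y <= n - 1 -> 1 <= x' <= n - 1 -> 1 <= y' <= n - 1 ->
  (exists k, B * x + x' = k * n) -> (exists k, B * y + y' = k * n) -> x * y <= d - 1 ->
  n - T <= x' * y'.
Proof.
move=> A_B x_bd y_bd x'_bd y'_bd x_cong y_cong xy_lt.
have dT := delta_add_T_le; have TT := T_sq_le.
case: (Z.le_gt_cases x (A - 1)) => [x_le | x_gt].
  by apply: (opp_residue_prod_ge_half A_B _ y_bd x'_bd y'_bd x_cong y_cong xy_lt); lia.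
case: (Z.le_gt_cases y (A - 1)) => [y_le | y_gt].
  rewrite Z.mul_comm.
  by apply: (opp_residue_prod_ge_half A_B _ x_bd y'_bd x'_bd y_cong x_cong); lia.
have : A * A <= x * y by apply: Z.mul_le_mono_nonneg; lia.
have : A * B <= A * A by apply: Z.mul_le_mono_nonneg_l; lia.
by lia.
Qed.

End DeltaInequalities.


Lemma exp_eq_or_double_le (q i k : nat) : 2 <= q -> i <= k -> q ^ i = q ^ k \/ 2 * q ^ i <= q ^ k.
Proof.
move=> q2; rewrite leq_eqVlt => /orP[/eqP -> | lt_ik]; [by left | right].
apply: (@leq_trans (q ^ i.+1)); first by rewrite expnS leq_mul2r q2 orbT.
by rewrite leq_exp2l.
Qed.

Lemma half_exp_ge4 (q m : nat) : 2 <= q -> 3 < m -> 4 <= q ^ m./2.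
Proof.
move=> q2 m3; apply: (@leq_trans (q ^ 2)); first by rewrite expnS expn1 (leq_mul q2 q2).
by rewrite leq_exp2l // -divn2 (@leq_div2r 2 4).
Qed.

Lemma hyp_delta_even (q m : nat) : ~~ odd m ->
  q ^ m./2 * q ^ m./2 = q ^ m /\ hyp_delta q m = (q ^ m./2 - 1) * (q ^ m./2 - 1).
Proof.
move=> /negbTE m_even; rewrite /hyp_delta m_even divn2 -mulnn; split => //.
by rewrite -expnD addnn -{2}(odd_double_half m) m_even.
Qed.

Lemma hyp_delta_odd (q m : nat) : odd m ->
  q ^ m = q * q ^ m./2 * q ^ m./2 /\ hyp_delta q m = q ^ m - 1 - q ^ m./2.
Proof.
move=> m_odd; have m_eq : m = (m./2).*2.+1 by rewrite -{1}(odd_double_half m) m_odd.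
rewrite /hyp_delta m_odd; split; first by rewrite -mulnA -expnD addnn -expnS -m_eq.
by have -> : (m - 1) %/ 2 = m./2 by rewrite {1}m_eq subn1 /= -muln2 mulnK.
Qed.

Section NatTransfer.
Local Open Scope Z_scope.

Lemma opp_residue_prod_ge_nat (n A B T d x y x' y' kx ky : nat) :
  (A * B = n.+1)%N -> (1 <= B <= T)%N -> (4 <= T)%N ->
  B = T \/ (2 * B <= T)%N -> A = B \/ (2 * B <= A)%N ->
  (T * T = n.+1 /\ d = (T - 1) * (T - 1))%N \/ (2 * T * T <= n.+1 /\ d = n - T)%N ->
  (0 < x < n)%N -> (0 < y < n)%N -> (0 < x' < n)%N -> (0 < y' < n)%N ->
  (x * B + x' = kx * n)%N -> (y * B + y' = ky * n)%N -> (x * y < d)%N ->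
  (n - T <= x' * y')%N.
Proof.
move=> AB B_bd T4 B_T A_B d_delta x_bd y_bd x'_bd y'_bd x_cong y_cong xy_lt.
have T_le : (T <= n)%N by case: d_delta => -[]; nia.
suff : Z.of_nat n - Z.of_nat T <= Z.of_nat x' * Z.of_nat y' by lia.
apply: (@opp_residue_prod_ge _ (Z.of_nat A) (Z.of_nat B) _ (Z.of_nat d) _ _ _ _ _ _
          (Z.of_nat x) (Z.of_nat y)); try lia.
- by exists (Z.of_nat kx); lia.
- by exists (Z.of_nat ky); lia.
Qed.

End NatTransfer.

Lemma opp_residue_prod_ge_pow (q m j n x y x' y' : nat) : 2 <= q -> 3 < m -> j.*2 <= m ->
  n.+1 = q ^ m -> 0 < x < n -> 0 < y < n -> 0 < x' < n -> 0 < y' < n ->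
  n %| x * q ^ j + x' -> n %| y * q ^ j + y' -> x * y < hyp_delta q m ->
  n - q ^ m./2 <= x' * y'.
Proof.
move=> q2 m3 jm nS x_bd y_bd x'_bd y'_bd /dvdnP[kx x_cong] /dvdnP[ky y_cong] xy_lt.
have j_half : j <= m./2 by rewrite geq_half_double.
have j_le : j <= m - j by lia.
have AB : q ^ (m - j) * q ^ j = n.+1 by rewrite -expnD subnK ?nS //; lia.
have B_T := exp_eq_or_double_le q2 j_half.
apply: (opp_residue_prod_ge_nat AB _ (half_exp_ge4 q2 m3) B_T _ _ x_bd y_bd x'_bd y'_bd
          x_cong y_cong xy_lt).
- by rewrite expn_gt0 leq_exp2l //; lia.
- by case: (exp_eq_or_double_le q2 j_le) => [B_A | ?]; [left; rewrite B_A | right].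
- case: (boolP (odd m)) => [/(hyp_delta_odd q) | /(hyp_delta_even q)] [qm ->]; [right | left].
    by split; [rewrite nS qm -!mulnA leq_mul2r q2 orbT | rewrite -nS; lia].
  by rewrite qm nS.
Qed.

Lemma hyp_delta_le (q m : nat) : 2 <= q -> 3 < m -> hyp_delta q m <= q ^ m - 1 - q ^ m./2.
Proof.
move=> q2 m3; have T4 := half_exp_ge4 q2 m3.
case: (boolP (odd m)) => [/(hyp_delta_odd q) [_ ->] // | /(hyp_delta_even q) [qm ->]].
by rewrite -qm; nia.
Qed.

Section ResiduesModN.
Local Open Scope ring_scope.

Variables (q m n : nat).
Hypotheses (n_gt1 : (1 < n)%N) (nS : n.+1 = (q ^ m)%N).

Lemma dvdn_Zp (e : nat) : (n %| e)%N = ((e%:R : 'Z_n) == 0).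
Proof. by rewrite /dvdn -val_eqE /= val_Zp_nat. Qed.

Lemma Zp_exp_order : (q%:R : 'Z_n) ^+ m = 1.
Proof. by rewrite -natrX -nS -natr1 -(Zp_nat_mod n_gt1 n) modnn add0r. Qed.

Lemma Zp_exp_modn (e : nat) : (q%:R : 'Z_n) ^+ e = (q%:R : 'Z_n) ^+ (e %% m).
Proof. by rewrite {1}(divn_eq e m) exprD mulnC exprM Zp_exp_order expr1n mul1r. Qed.

Lemma dvdn_rotate (x x' k1 k2 k : nat) : (0 < m)%N ->
  (n %| (x * q ^ k1) %% n * q ^ k + (x' * q ^ k2) %% n)%N ->
  (n %| x * q ^ ((k1 + k + (m - 1) * k2) %% m) + x')%N.
Proof.
(* Multiply by q^((m-1) k2), the inverse of q^k2 modulo n. *)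
move=> m_gt0; rewrite !dvdn_Zp !natrD !natrM !Zp_nat_mod // !natrM !natrX -Zp_exp_modn.
set Q := (q%:R : 'Z_n); set X := (x%:R : 'Z_n); set X' := (x'%:R : 'Z_n).
move=> /eqP cong; apply/eqP.
have -> : X' = X' * Q ^+ (k2 + (m - 1) * k2).
  by rewrite -mulSn subn1 prednK // exprM Zp_exp_order expr1n mulr1.
transitivity (Q ^+ ((m - 1) * k2) * (X * Q ^+ k1 * Q ^+ k + X' * Q ^+ k2)).
  by rewrite !exprD; ring.
by rewrite cong mulr0.
Qed.

Lemma dvdn_swap (x x' j : nat) : (j <= m)%N ->
  (n %| x * q ^ j + x')%N -> (n %| x' * q ^ (m - j) + x)%N.
Proof.
move=> j_le; rewrite !dvdn_Zp !natrD !natrM !natrX.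
set Q := (q%:R : 'Z_n); set X := (x%:R : 'Z_n); set X' := (x'%:R : 'Z_n).
move=> /eqP cong; apply/eqP.
have -> : X = X * (Q ^+ j * Q ^+ (m - j)) by rewrite -exprD subnKC // Zp_exp_order mulr1.
transitivity (Q ^+ (m - j) * (X * Q ^+ j + X')); first by ring.
by rewrite cong mulr0.
Qed.

End ResiduesModN.

Definition zero_set_meets_opp (n q m d : nat) : Prop :=
  exists a b a' b' k, [/\ k < m, in_zero_set n q d a b, in_zero_set n q d a' b',
    n %| a * q ^ k + a' & n %| b * q ^ k + b'].

Lemma in_zero_set_small (n q d a b : nat) : d <= n -> in_zero_set n q d a b ->
  exists x y k, [/\ 0 < x < n, 0 < y < n, x * y < d, a = x * q ^ k %% n & b = y * q ^ k %% n].
Proof.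
move=> d_le [x [y [k [/andP[x_gt0 _] /andP[y_gt0 _] xy_lt -> ->]]]].
have x_lt : x < n by apply: leq_ltn_trans (leq_pmulr x y_gt0) (leq_trans xy_lt d_le).
have y_lt : y < n by apply: leq_ltn_trans (leq_pmull y x_gt0) (leq_trans xy_lt d_le).
by exists x, y, k; rewrite (modn_small x_lt) (modn_small y_lt) x_gt0 x_lt y_gt0 y_lt.
Qed.

Lemma in_zero_set_of_small (n q d x y : nat) : 0 < x < n -> 0 < y < n -> x * y < d ->
  in_zero_set n q d x y.
Proof.
move=> /andP[x_gt0 x_lt] /andP[y_gt0 y_lt] xy_lt; exists x, y, 0.
by rewrite expn0 !muln1 !modn_small // x_gt0 y_gt0 (ltnW x_lt) (ltnW y_lt).
Qed.

Lemma zero_set_meets_opp_delta_lt (q m n d : nat) : 2 <= q -> 3 < m -> n.+1 = q ^ m ->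
  zero_set_meets_opp n q m d -> hyp_delta q m < d.
Proof.
move=> q2 m3 nS [a [b [a' [b' [k [k_lt Zab Za'b' a_cong b_cong]]]]]].
rewrite ltnNge; apply/negP => d_le.
have T4 := half_exp_ge4 q2 m3; have delta_le := hyp_delta_le q2 m3.
rewrite -nS subn1 /= in delta_le.
have T_lt : q ^ m./2 < n.+1 by rewrite nS ltn_exp2l // ltn_half_double -addnn; lia.
have n_gt1 : 1 < n by lia.
have d_le_n : d <= n by lia.
have [x [y [k1 [x_bd y_bd xy_lt a_eq b_eq]]]] := in_zero_set_small d_le_n Zab.
have [x' [y' [k2 [x'_bd y'_bd x'y'_lt a'_eq b'_eq]]]] := in_zero_set_small d_le_n Za'b'.
subst a b a' b'.
have m_gt0 : 0 < m by lia.
have x_cong := dvdn_rotate n_gt1 nS m_gt0 a_cong.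
have y_cong := dvdn_rotate n_gt1 nS m_gt0 b_cong.
set j := (k1 + k + (m - 1) * k2) %% m in x_cong y_cong.
have j_lt : j < m by rewrite ltn_pmod.
case: (leqP j.*2 m) => j_half.
  have := opp_residue_prod_ge_pow q2 m3 j_half nS x_bd y_bd x'_bd y'_bd x_cong y_cong.
  by clear -xy_lt x'y'_lt d_le delta_le; lia.
have j'_half : (m - j).*2 <= m by clear -j_half j_lt; lia.
have := opp_residue_prod_ge_pow q2 m3 j'_half nS x'_bd y'_bd x_bd y_bd
  (dvdn_swap n_gt1 nS (ltnW j_lt) x_cong) (dvdn_swap n_gt1 nS (ltnW j_lt) y_cong).
by clear -xy_lt x'y'_lt d_le delta_le; lia.
Qed.

Lemma delta_lt_zero_set_meets_opp (q m n d : nat) : 2 <= q -> 3 < m -> n.+1 = q ^ m ->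
  hyp_delta q m < d -> zero_set_meets_opp n q m d.
Proof.
move=> q2 m3 nS delta_lt; have T4 := half_exp_ge4 q2 m3.
have h_lt : m./2.+1 < m by rewrite -divn2; lia.
case: (boolP (odd m)) => [/(hyp_delta_odd q) | /(hyp_delta_even q)] [qm delta_eq];
  rewrite delta_eq in delta_lt; set T := q ^ m./2 in T4 qm delta_lt *.
  have nE : n.+1 = q * T * T by rewrite nS.
  have qT_lt : q * T < n by nia.
  have qT_ge : 2 * T <= q * T by rewrite leq_mul2r q2 orbT.
  exists 1, (n - T), (n - q * T), 1, m./2.+1; split => //.
  - by apply: in_zero_set_of_small; lia.
  - by apply: in_zero_set_of_small; nia.
  - by rewrite mul1n expnS -/T subnKC ?dvdnn // ltnW.
  - by apply/dvdnP; exists (q * T - 1); rewrite expnS -/T; nia.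
have T_sq : T * T = n.+1 by rewrite nS.
have n_eq : (T - 1) * T + (T - 1) = n by nia.
have Z_T : in_zero_set n q d (T - 1) (T - 1) by apply: in_zero_set_of_small; nia.
exists (T - 1), (T - 1), (T - 1), (T - 1), m./2.
by rewrite -/T n_eq dvdnn; split => //; exact: ltnW.
Qed.

Section TraceDuality.
Local Open Scope ring_scope.

Variables (F : finFieldType) (L : fieldExtType F).
Local Notation q := #|F|.

Lemma card_gt1 : (1 < q)%N.
Proof. exact: finNzRing_gt1. Qed.

Lemma pchar_nat_card_exp k : [pchar L].-nat (q ^ k)%N.
Proof.
have [p _ pFp] := finPcharP F.
rewrite pnatX (card_pprimeChar pFp) pnatX (eq_pnat _ (pchar_lalg L)).
by rewrite (eq_pnat _ (pcharf_eq pFp)) pnat_id ?orbT //; case/andP: pFp.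
Qed.

Lemma exp_card_sum k (I : Type) (r : seq I) (P : pred I) (f : I -> L) :
  (\sum_(i <- r | P i) f i) ^+ (q ^ k)%N = \sum_(i <- r | P i) f i ^+ (q ^ k)%N.
Proof.
apply: (big_morph (fun y : L => y ^+ (q ^ k)%N)).
  by move=> y z; apply: exprDn_pchar; exact: pchar_nat_card_exp.
by rewrite expr0n expn_eq0 eqn0Ngt (ltnW card_gt1).
Qed.

Lemma exp_card_alg k (c : F) : (c%:A : L) ^+ (q ^ k)%N = c%:A.
Proof.
rewrite exprZn expr1n; congr (_ *: _).
by elim: k => [|k IHk]; rewrite ?expr1 // expnSr exprM IHk expf_card.
Qed.

Lemma exp_card_fixed (y : L) : y ^+ q = y -> exists c : F, y = c%:A.
Proof.
move=> yq; have : y \in (1%AS : {aspace L}).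
  by rewrite (Fermat's_little_theorem 1%AS y) dimv1 expn1 yq.
by case/vlineP => c ->; exists c.
Qed.

Lemma exp_card_dim (y : L) : y ^+ (q ^ \dim {:L})%N = y.
Proof. by apply/eqP; rewrite -(Fermat's_little_theorem {:L}%AS y) memvf. Qed.

Lemma natr_card : (q%:R : L) = 0.
Proof.
have [p _ pFp] := finPcharP F.
have pLp : p \in [pchar L] by rewrite (pchar_lalg L).
rewrite [in LHS](card_pprimeChar pFp) natrX (pcharf0 pLp) expr0n.
by case: eqP => // k0; move: card_gt1; rewrite (card_pprimeChar pFp) k0.
Qed.

Variables (m n : nat) (alpha : L).
Hypotheses (dimL : \dim {:L} = m) (nS : n.+1 = (q ^ m)%N)
  (alpha_prim : n.-primitive_root alpha) (m_gt1 : (1 < m)%N).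

Definition frob_trace (y : L) : L := \sum_(k < m) y ^+ (q ^ k)%N.

Lemma frob_trace_exp_card y : frob_trace y ^+ q = frob_trace y.
Proof.
rewrite -[q in _ ^+ q]expn1 /frob_trace exp_card_sum.
have y_qm : y ^+ (q ^ m)%N = y by rewrite -dimL exp_card_dim.
case: m m_gt1 y_qm => // m' _ y_qm.
rewrite big_ord_recr big_ord_recl /=.
under eq_bigr do rewrite -exprM -expnSr.
by rewrite -exprM -expnSr y_qm expn0 expr1 addrC.
Qed.

Definition trace_coef (y : L) : F := odflt 0 [pick c : F | c%:A == frob_trace y].

Lemma trace_coefE y : (trace_coef y)%:A = frob_trace y.
Proof.
rewrite /trace_coef; case: pickP => [c /eqP // | no_coef].
have [c c_eq] := exp_card_fixed (frob_trace_exp_card y).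
by move: (no_coef c); rewrite c_eq eqxx.
Qed.

Lemma frob_trace0 : frob_trace 0 = 0.
Proof.
rewrite /frob_trace big1 // => k _.
by rewrite expr0n expn_eq0 eqn0Ngt (ltnW card_gt1).
Qed.

Lemma frob_trace_algM (c : F) y : frob_trace (c%:A * y) = c%:A * frob_trace y.
Proof.
by rewrite /frob_trace mulr_sumr; apply: eq_bigr => k _; rewrite exprMn exp_card_alg.
Qed.

Lemma frob_trace_sum (I : Type) (r : seq I) (P : pred I) (f : I -> L) :
  frob_trace (\sum_(i <- r | P i) f i) = \sum_(i <- r | P i) frob_trace (f i).
Proof. by rewrite /frob_trace; under eq_bigr do rewrite exp_card_sum; exact: exchange_big. Qed.

Lemma natr_n : (n%:R : L) = -1.
Proof.
apply/eqP; rewrite -subr_eq0 opprK natr1 nS natrX natr_card expr0n.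
by rewrite eqn0Ngt (ltn_trans _ m_gt1).
Qed.

Lemma sum_prim_root_exp e :
  \sum_(i < n) (alpha ^+ e) ^+ i = if (n %| e)%N then n%:R else 0.
Proof.
case: ifP => n_dvd.
  have -> : alpha ^+ e = 1 by apply/eqP; rewrite -(prim_order_dvd alpha_prim).
  by under eq_bigr do rewrite expr1n; rewrite sumr_const card_ord.
have ae_neq1 : alpha ^+ e - 1 != 0 by rewrite subr_eq0 -(prim_order_dvd alpha_prim) n_dvd.
have : (alpha ^+ e) ^+ n - 1 = 0 by rewrite exprAC (prim_expr_order alpha_prim) expr1n subrr.
by rewrite subrX1 => /eqP; rewrite mulf_eq0 (negbTE ae_neq1) => /eqP.
Qed.

Lemma exp_pred_lt_n : (q ^ m.-1 < n)%N.
Proof.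
have m_eq : m = m.-1.+1 by rewrite prednK // (ltn_trans _ m_gt1).
have h2 : (2 <= q ^ m.-1)%N.
  by rewrite (leq_trans card_gt1) // -{1}(expn1 q) leq_exp2l ?card_gt1 // -ltnS -m_eq.
have : (2 * q ^ m.-1 <= q ^ m)%N by rewrite {2}m_eq expnS leq_mul2r card_gt1 orbT.
by rewrite -nS; lia.
Qed.

Definition frob_poly (K : pred nat) : {poly L} := \sum_(k < m | K k) 'X^(q ^ k).

Lemma frob_polyE (K : pred nat) x : (frob_poly K).[x] = \sum_(k < m | K k) x ^+ (q ^ k)%N.
Proof. by rewrite horner_sum; apply: eq_bigr => k _; rewrite hornerXn. Qed.

Lemma frob_poly_neq0 (K : pred nat) k0 : (k0 < m)%N -> K k0 -> frob_poly K != 0.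
Proof.
move=> k0_lt Kk0; apply/eqP => /(congr1 (fun p : {poly L} => p`_(q ^ k0)%N)).
rewrite coef0 coef_sum (bigD1 (Ordinal k0_lt)) //= coefXn eqxx big1 ?addr0.
  by move/eqP; rewrite oner_eq0.
move=> k /andP[_ k_neq]; rewrite coefXn.
case: eqP => // /(expnI card_gt1) k_eq.
by move: k_neq; rewrite -val_eqE /= k_eq eqxx.
Qed.

Lemma size_frob_poly (K : pred nat) : (size (frob_poly K) <= (q ^ m.-1).+1)%N.
Proof.
apply: leq_trans (size_sum _ _ _) _.
apply/bigmax_leqP => k _; rewrite size_polyXn ltnS leq_exp2l ?card_gt1 //.
by rewrite -ltnS prednK // (ltn_trans _ m_gt1).
Qed.

(* The polynomial frob_poly K has degree at most q^(m-1) < n, so it cannot vanish at the n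
   distinct points alpha^t w. *)
Lemma frob_sum_nonvanishing (K : pred nat) k0 (w : L) : (k0 < m)%N -> K k0 -> w != 0 ->
  exists2 t, (t < n)%N & \sum_(k < m | K k) (alpha ^+ t * w) ^+ (q ^ k)%N != 0.
Proof.
move=> k0_lt Kk0 w_neq0.
have [[t t_ne] | all_zero] := pickP [pred t : 'I_n | \sum_(k < m | K k) (alpha ^+ t * w) ^+ (q ^ k)%N != 0].
  by exists t.
pose pts := [seq alpha ^+ t * w | t <- iota 0 n].
have roots : all (root (frob_poly K)) pts.
  apply/allP => x /mapP[t]; rewrite mem_iota add0n => /andP[_ t_lt] ->.
  by move: (all_zero (Ordinal t_lt)); rewrite /root frob_polyE /= => /negbFE.
have pts_uniq : uniq pts.
  rewrite map_inj_in_uniq ?iota_uniq // => t s.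
  rewrite !mem_iota !add0n => /andP[_ t_lt] /andP[_ s_lt] /(mulIf w_neq0) /eqP.
  by rewrite (eq_prim_root_expr alpha_prim) !modn_small // => /eqP.
have := max_poly_roots (frob_poly_neq0 k0_lt Kk0) roots pts_uniq.
rewrite size_map size_iota => /leq_trans /(_ (size_frob_poly K)).
by rewrite ltnS leqNgt exp_pred_lt_n.
Qed.

Definition trace_mx (t a b : nat) : 'M[F]_n :=
  \matrix_(i, j) trace_coef (alpha ^+ (t + a * i + b * j)).

Lemma trace_mx_dot (u : 'M[F]_n) t a b :
  ((\sum_i \sum_j u i j * trace_mx t a b i j)%:A : L) =
  frob_trace (alpha ^+ t * biv_eval u (alpha ^+ a) (alpha ^+ b)).
Proof.
rewrite /biv_eval mulr_sumr frob_trace_sum scaler_suml; apply: eq_bigr => i _.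
rewrite mulr_sumr frob_trace_sum scaler_suml; apply: eq_bigr => j _.
rewrite -scalerA mxE -mulr_algl trace_coefE mulrCA -!mulrA frob_trace_algM.
by congr (_ * frob_trace _); rewrite -!exprM -!exprD; congr (alpha ^+ _); lia.
Qed.

Lemma biv_eval_trace_mx t a b a' b' :
  biv_eval (trace_mx t a b) (alpha ^+ a') (alpha ^+ b') =
  \sum_(k < m | (n %| a * q ^ k + a')%N && (n %| b * q ^ k + b')%N) (alpha ^+ t) ^+ (q ^ k)%N.
Proof.
have entryE (i j : 'I_n) : (trace_mx t a b i j)%:A * (alpha ^+ a') ^+ i * (alpha ^+ b') ^+ j =
    \sum_(k < m) (alpha ^+ t) ^+ (q ^ k)%N * (alpha ^+ (a * q ^ k + a')) ^+ i
      * (alpha ^+ (b * q ^ k + b')) ^+ j.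
  rewrite mxE trace_coefE /frob_trace !mulr_suml; apply: eq_bigr => k _.
  by rewrite -!exprM -!exprD; congr (alpha ^+ _); lia.
rewrite /biv_eval; under eq_bigr do under eq_bigr do rewrite entryE.
under eq_bigr do rewrite exchange_big.
rewrite exchange_big [RHS]big_mkcond; apply: eq_bigr => k _.
under eq_bigr do rewrite -mulr_sumr.
rewrite -mulr_suml -mulr_sumr !sum_prim_root_exp.
by case: ifP; case: ifP; rewrite /= ?natr_n ?mulr0 ?mul0r // -mulrA mulrNN !mulr1.
Qed.

Lemma dual_containing_not_meets d :
  dual_containing n (hyp_code n q d alpha) -> ~ zero_set_meets_opp n q m d.
Proof.
move=> dual_sub [a [b [a' [b' [k [k_lt Zab Za'b' a_cong b_cong]]]]]].
pose K k := (n %| a * q ^ k + a')%N && (n %| b * q ^ k + b')%N.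
have [t _ sum_neq0] := @frob_sum_nonvanishing K k 1 k_lt (introT andP (conj a_cong b_cong))
  (oner_neq0 _).
have u_dual : euclid_dual n (hyp_code n q d alpha) (trace_mx t a b).
  move=> v v_code; apply: (fmorph_inj (in_alg L)); rewrite rmorph0 /=.
  under eq_bigr do under eq_bigr do rewrite mulrC.
  by rewrite trace_mx_dot (v_code a b Zab) mulr0 frob_trace0.
move: sum_neq0; under eq_bigr do rewrite mulr1.
by rewrite -biv_eval_trace_mx (dual_sub _ u_dual a' b' Za'b') eqxx.
Qed.

Lemma not_meets_dual_containing d :
  ~ zero_set_meets_opp n q m d -> dual_containing n (hyp_code n q d alpha).
Proof.
move=> no_meet u u_dual a b Zab; apply/eqP/negPn/negP => u_ab_neq0.
have [t _ sum_neq0] := @frob_sum_nonvanishing xpredT 0 _ (ltn_trans (ltnSn 0) m_gt1) isT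
  u_ab_neq0.
have v_code : hyp_code n q d alpha (trace_mx t a b).
  move=> a' b' Za'b'; rewrite biv_eval_trace_mx big_pred0 // => k.
  apply/negP => /andP[a_cong b_cong]; apply: no_meet.
  by exists a, b, a', b', k.
move: sum_neq0; have := congr1 (fun c : F => (c%:A : L)) (u_dual _ v_code).
by rewrite trace_mx_dot scale0r -/(frob_trace _) => ->; rewrite eqxx.
Qed.

End TraceDuality.

Local Open Scope ring_scope.

Theorem theorem3 (F : finFieldType) (L : fieldExtType F) (q m n d : nat)
  (alpha : L) :
  #|F| = q -> (3 < m)%N -> n = (q ^ m - 1)%N -> \dim {:L} = m ->
  n.-primitive_root alpha -> (2 <= d)%N ->
  (dual_containing n (hyp_code n q d alpha) <-> (d <= hyp_delta q m)%N).
Proof.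
move=> card_F m_gt3 n_eq dimL alpha_prim _.
have q_ge2 : (2 <= q)%N by rewrite -card_F; exact: card_gt1.
have m_gt1 : (1 < m)%N by apply: ltn_trans m_gt3.
have nS : n.+1 = (q ^ m)%N by rewrite n_eq subn1 prednK // expn_gt0; lia.
subst q; split => [dual_sub | d_le].
  rewrite leqNgt; apply/negP => /(delta_lt_zero_set_meets_opp q_ge2 m_gt3 nS).
  exact: dual_containing_not_meets dimL nS alpha_prim m_gt1 d dual_sub.
apply: (not_meets_dual_containing dimL nS alpha_prim m_gt1).
by move=> /(zero_set_meets_opp_delta_lt q_ge2 m_gt3 nS); rewrite ltnNge d_le.
Qed.
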